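(* Let $m\ge1$, $n=2m$, $1\le k\le n$. Let $g\in\mathbb{F}_{q^n}$ be a normal element over $\mathbb{F}_q$, $\bm{g}=(g^{q^{n-1}},\dots,g^{q},g)$, and $G=\mathcal{P}_k(\bm{g})$. Let $M\in GL_n(\mathbb{F}_{q^n})$ be a circulant matrix. Let $\varphi:\mathbb{F}_{q^n}\to\mathbb{F}_{q^n}$ be an $\mathbb{F}_{q^m}$-linear automorphism that is fully linear over $\mathbb{F}_{q^n}$ (with respect to the base field $\mathbb{F}_{q^m}$). Then $\varphi(M)$ is invertible and there exists $j\in\{0,1\}$ such that $\varphi(GM)\varphi(M)^{-1}=G^{(q^{mj})}$, where $G^{(q^{mj})}$ denotes the matrix obtained by raising every entry of $G$ to the power $q^{mj}$.
   Context: $q$ is a prime power (the paper takes $q$ a power of $2$). $g\in\mathbb{F}_{q^n}$ is normal over $\mathbb{F}_q$ if $g,g^q,\dots,g^{q^{n-1}}$ form an $\mathbb{F}_q$-basis of $\mathbb{F}_{q^n}$. For $\bm{v}=(v_0,\dots,v_{n-1})$, the circulant matrix $\mathcal{P}_n(\bm{v})$ is the $n\times n$ matrix whose first row is $\bm{v}$ and whose $(i+1)$-th row is the cyclic right shift of the $i$-th row, i.e. rows $(v_0,\dots,v_{n-1}),(v_{n-1},v_0,\dots,v_{n-2}),\dots,(v_1,\dots,v_{n-1},v_0)$; $\mathcal{P}_k(\bm{v})$ is the matrix of its first $k$ rows. $\varphi$ is applied entrywise to matrices. An $\mathbb{F}_{q^m}$-linear automorphism $\varphi$ of $\mathbb{F}_{q^n}$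 (a bijective $\mathbb{F}_{q^m}$-linear map) is fully linear over $\mathbb{F}_{q^n}$ if for every length $N$ and every $\mathbb{F}_{q^n}$-linear code $\mathcal{C}\subseteq\mathbb{F}_{q^n}^N$, the set $\varphi(\mathcal{C})=\{\varphi(\bm{c}):\bm{c}\in\mathcal{C}\}$ (componentwise application) is again $\mathbb{F}_{q^n}$-linear. *)

From HB Require Import structures.
From mathcomp Require Import all_boot all_order all_algebra all_field.
Set Implicit Arguments. Unset Strict Implicit. Unset Printing Implicit Defensive.
Import GRing.Theory.
Local Open Scope ring_scope.

(* Setting: L : finFieldType with #|L| = q^n plays F_{q^n}; the subfield
   F_{q^e} of L is { x | x ^+ q^e = x }. *)

Definition in_subfield (L : fieldType) (Q : nat) (x : L) : Prop := x ^+ Q = x.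

Definition normal_elt (L : fieldType) (q n : nat) (g : L) : Prop :=
  (forall c : 'I_n -> L, (forall i, in_subfield q (c i)) ->
     \sum_(i < n) c i * g ^+ (q ^ i) = 0 -> forall i, c i = 0) /\
  (forall x : L, exists c : 'I_n -> L, (forall i, in_subfield q (c i)) /\
     x = \sum_(i < n) c i * g ^+ (q ^ i)).

Lemma cidx_subproof n (j : 'I_n) (i : nat) : ((j + n - i) %% n < n)%N.
Proof. by apply: ltn_pmod; apply: leq_ltn_trans (ltn_ord j). Qed.

Definition cidx n (i : nat) (j : 'I_n) : 'I_n := Ordinal (cidx_subproof j i).

(* P_k(v): first k rows of the circulant matrix whose first row is v and whose
   (i+1)-th row is the cyclic right shift of the i-th row:
   entry (i, j) = v_{(j - i) mod n} *)
Definition circP (L : Type) (k n : nat) (v : 'rV[L]_n) : 'M[L]_(k, n) :=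
  \matrix_(i < k, j < n) v 0 (cidx i j).

Definition is_circulant (L : Type) (n : nat) (M : 'M[L]_n) : Prop :=
  exists v : 'rV[L]_n, M = circP n v.

Definition gvec (L : fieldType) (q n : nat) (g : L) : 'rV[L]_n :=
  \row_(j < n) g ^+ (q ^ (n - 1 - j)).

Definition lin_automorphism (L : fieldType) (Q : nat) (phi : L -> L) : Prop :=
  bijective phi /\ (forall x y, phi (x + y) = phi x + phi y) /\
  (forall a x, in_subfield Q a -> phi (a * x) = a * phi x).

Definition lin_code (L : finFieldType) (N : nat) (C : {set 'rV[L]_N}) : Prop :=
  0 \in C /\ (forall (a : L) x y, x \in C -> y \in C -> a *: x + y \in C).

Definition fully_linear (L : finFieldType) (phi : L -> L) : Prop :=
  forall (N : nat) (C : {set 'rV[L]_N}), lin_code C ->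
    lin_code [set map_mx phi c | c in C].

From HB Require Import structures.
From mathcomp Require Import all_boot all_order all_algebra all_field.
From mathcomp Require abelian pgroup.
From mathcomp Require Import ring.
From Stdlib Require Import Classical.
Set Implicit Arguments. Unset Strict Implicit. Unset Printing Implicit Defensive.
Import GRing.Theory.
Local Open Scope ring_scope.

(* Let L be the field with q^n = q^(2m) elements, Q = q^m,
   and phi an additive F_Q-linear bijection of L that is fully linear.
   1. Applying full linearity to the line spanned by (1, x) in L^2 shows
      phi(a x) phi(1) = phi(a) phi(x); hence psi := phi / phi(1) is a
      ring endomorphism of L.
   2. psi fixes F_Q (F_Q-linearity of phi).  Since x + x^Q and x x^Q lie in
      F_Q, psi(x) is a root of (T - x)(T - x^Q), so psi(x) is x or x^Q;
      additivity then forces psi = id or psi = Frob_Q globally, i.e.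
      psi x = x^(q^(m j)) for some j <= 1.
   3. Entrywise application of a ring endomorphism commutes with matrix
      products and preserves invertibility, while phi = phi(1) * psi only
      adds a nonzero scalar, which cancels in phi(G M) phi(M)^-1.
   The conclusion therefore holds for every k x n matrix G. *)

(* The q^e-th power map is additive when #|L| is a positive power of q:
   L is a p-group for its characteristic p, so q^e is a power of p. *)
Lemma frobenius_qpow_additive (L : finFieldType) (q n e : nat) :
  #|L| = (q ^ n)%N -> (0 < n)%N ->
  forall x y : L, (x + y) ^+ (q ^ e) = x ^+ (q ^ e) + y ^+ (q ^ e).
Proof.
move=> hcard n_gt0 x y; apply: exprDn_pchar.
have [p p_pr pcharL] := finPcharP L.
rewrite (eq_pnat _ (pcharf_eq pcharL)).
have := abelian.abelem_pgroup (abelian.fin_ring_pchar_abelem pcharL).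
rewrite /pgroup.pgroup cardsT hcard pnatX => /orP[p_q|]; last by rewrite eqn0Ngt n_gt0.
by rewrite pnatX p_q.
Qed.

Lemma additive_map0 (V : zmodType) (f : V -> V) :
  (forall x y, f (x + y) = f x + f y) -> f 0 = 0.
Proof. by move=> fD; apply/(addrI (f 0)); rewrite -fD !addr0. Qed.

Section FullyLinearMaps.

Variables (L : finFieldType) (phi : L -> L).
Hypotheses (phi_inj : injective phi) (phiD : forall x y, phi (x + y) = phi x + phi y).
Hypothesis phi_full : fully_linear phi.

Lemma phi1_neq0 : phi 1 != 0.
Proof.
apply: contra (oner_neq0 L) => /eqP phi1_0.
by apply/eqP/phi_inj; rewrite phi1_0 (additive_map0 phiD).
Qed.

(* The image of the line L (1, x) is again a line, so it contains the
   multiple (phi a / phi 1) (phi 1, phi x) of the image of (1, x); the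
   preimage of that point is (a, a x). *)
Lemma fully_linear_mul (a x : L) : phi (a * x) * phi 1 = phi a * phi x.
Proof.
pose w : 'rV[L]_2 := \row_(i < 2) (if i == ord0 then 1 else x).
pose C := [set b *: w | b : L].
have C_lin : lin_code C.
  split; first by apply/imsetP; exists 0 => //; rewrite scale0r.
  move=> b y z /imsetP[u _ ->] /imsetP[v _ ->].
  by apply/imsetP; exists (b * u + v) => //; rewrite scalerDl scalerA.
have [phiC0 phiC_closed] := phi_full C_lin.
have phi_w : map_mx phi w \in [set map_mx phi c | c in C].
  by apply/imsetP; exists w => //; apply/imsetP; exists 1 => //; rewrite scale1r.
have /imsetP[_ /imsetP[u _ ->] /matrixP E] := phiC_closed (phi a / phi 1) _ _ phi_w phiC0.
have := E 0 0; have := E 0 1; rewrite !mxE /= !addr0 mulr1 => E1 E0.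
have u_a : u = a by apply: phi_inj; rewrite -E0 divfK ?phi1_neq0.
by rewrite -u_a -E1 -u_a mulrAC divfK ?phi1_neq0.
Qed.

Definition normalized (x : L) : L := phi x / phi 1.

Lemma normalizedD x y : normalized (x + y) = normalized x + normalized y.
Proof. by rewrite /normalized phiD mulrDl. Qed.

Lemma normalizedM x y : normalized (x * y) = normalized x * normalized y.
Proof.
have phi1_nz := phi1_neq0.
by rewrite /normalized -[phi (x * y)](mulfK phi1_nz) fully_linear_mul; field.
Qed.

Lemma normalized1 : normalized 1 = 1.
Proof. by rewrite /normalized divff ?phi1_neq0. Qed.

Lemma normalized_scale_eq : phi =1 (fun x => phi 1 * normalized x).
Proof. by move=> x; rewrite /normalized mulrC divfK ?phi1_neq0. Qed.

End FullyLinearMaps.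

Section FieldEndomorphisms.

Variables (L : fieldType) (psi : L -> L).
Hypotheses (psiD : forall x y, psi (x + y) = psi x + psi y)
           (psiM : forall x y, psi (x * y) = psi x * psi y) (psi1 : psi 1 = 1).

Lemma map_mx_endoM a b c (A : 'M[L]_(a, b)) (B : 'M[L]_(b, c)) :
  map_mx psi (A *m B) = map_mx psi A *m map_mx psi B.
Proof.
apply/matrixP=> i j; rewrite !mxE (big_morph psi psiD (additive_map0 psiD)).
by apply: eq_bigr => l _; rewrite psiM !mxE.
Qed.

Lemma map_mx_endo_unit n (A : 'M[L]_n) : A \in unitmx -> map_mx psi A \in unitmx.
Proof.
move=> A_unit; have : map_mx psi A *m map_mx psi (invmx A) = 1%:M.
  rewrite -map_mx_endoM mulmxV //; apply/matrixP=> i l; rewrite !mxE.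
  by case: (i == l); rewrite ?psi1 ?(additive_map0 psiD).
by case/mulmx1_unit.
Qed.

(* Let frob be a ring involution of L (for us x |-> x^Q on the field with
   Q^2 elements), with fixed field F.  An endomorphism psi fixing F
   pointwise is frob or the identity. *)
Variable frob : L -> L.
Hypotheses (frobD : forall x y, frob (x + y) = frob x + frob y)
           (frobM : forall x y, frob (x * y) = frob x * frob y)
           (frobK : involutive frob) (psi_fix : forall a, frob a = a -> psi a = a).

(* psi x is a root of (T - x)(T - frob x), whose coefficients lie in F. *)
Lemma endo_pointwise x : psi x = x \/ psi x = frob x.
Proof.
have sum_fixed : psi (x + frob x) = x + frob x by apply: psi_fix; rewrite frobD frobK addrC.
have prod_fixed : psi (x * frob x) = x * frob x by apply: psi_fix; rewrite frobM frobK mulrC.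
rewrite psiD in sum_fixed; rewrite psiM in prod_fixed.
have : (psi x - x) * (psi x - frob x) = 0.
  transitivity (psi x * psi x - (x + frob x) * psi x + x * frob x); first by ring.
  by rewrite -{1}sum_fixed -prod_fixed; ring.
by move/eqP; rewrite mulf_eq0 => /orP[] /eqP/subr0_eq; [left|right].
Qed.

(* If psi moves some a, then psi agrees with frob everywhere: otherwise
   psi (a + b) would be neither a + b nor frob (a + b). *)
Lemma endo_id_or_frob : psi =1 id \/ psi =1 frob.
Proof.
have [[a psi_a]|none_moved] := classic (exists a, psi a != a); last first.
  by left=> x; apply/eqP/negP=> psi_x; apply: none_moved; exists x; apply/negP.
have psi_aE : psi a = frob a by case: (endo_pointwise a) => // h; rewrite h eqxx in psi_a.
right=> b; case: (endo_pointwise b) => // psi_b.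
case: (endo_pointwise (a + b)); rewrite psiD psi_aE psi_b.
  by move/addIr => e; rewrite psi_aE e eqxx in psi_a.
by rewrite frobD => /addrI <-.
Qed.

End FieldEndomorphisms.

Theorem mainTheorem7 (L : finFieldType) (q m n k : nat)
  (hq : (1 < q)%N) (hm : (1 <= m)%N) (hn : n = (2 * m)%N)
  (hcard : #|L| = (q ^ n)%N) (hk1 : (1 <= k)%N) (hkn : (k <= n)%N)
  (g : L) (hg : normal_elt q n g)
  (M : 'M[L]_n) (hMc : is_circulant M) (hMu : M \in unitmx)
  (phi : L -> L) (hphi : lin_automorphism (q ^ m) phi)
  (hfull : fully_linear phi) :
  let G : 'M[L]_(k, n) := circP k (gvec q n g) in
  map_mx phi M \in unitmx /\
  exists j : nat, (j <= 1)%N /\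
    map_mx phi (G *m M) *m invmx (map_mx phi M)
      = map_mx (fun x => x ^+ (q ^ (m * j))) G.
Proof.
move=> G; have [[phi_inv phiK _] [phiD phi_lin]] := hphi.
have phi_inj : injective phi := can_inj phiK.
pose psi := normalized phi.
have phi1_nz : phi 1 != 0 := phi1_neq0 phi_inj phiD.
have psiD := normalizedD phiD.
have psiM := normalizedM phi_inj phiD hfull.
have psi1 := normalized1 phi_inj phiD.
have n_gt0 : (0 < n)%N by rewrite hn muln_gt0.
have frobD := frobenius_qpow_additive m hcard n_gt0.
have frobK : involutive (fun x : L => x ^+ (q ^ m)).
  by move=> x; rewrite -exprM -expnD addnn -mul2n -hn -hcard expf_card.
have psi_fix a : a ^+ (q ^ m) = a -> psi a = a.
  by move=> fix_a; rewrite /psi /normalized -{1}[a]mulr1 phi_lin ?mulfK.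
have [j [j_le1 psiE]] : exists j, (j <= 1)%N /\ psi =1 (fun x => x ^+ (q ^ (m * j))).
  have [psi_id|psi_frob] := endo_id_or_frob psiD psiM frobD (exprMn (q ^ m)) frobK psi_fix.
    by exists 0%N; split=> // x; rewrite /psi psi_id muln0 expn0 expr1.
  by exists 1%N; split=> // x; rewrite /psi psi_frob muln1.
have phiE a b (A : 'M[L]_(a, b)) : map_mx phi A = phi 1 *: map_mx psi A.
  by apply/matrixP=> i l; rewrite !mxE (normalized_scale_eq phi_inj phiD).
have phi1_unit : phi 1 \is a GRing.unit by rewrite unitfE.
have psiM_unit := map_mx_endo_unit psiD psiM psi1 hMu.
split; first by rewrite phiE unitmxZ.
exists j; split=> //.
rewrite !phiE invmxZ ?unitmxZ // (map_mx_endoM psiD psiM) -scalemxAl -scalemxAr scalerA mulfV // scale1r.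
by rewrite mulmxK //; apply: eq_map_mx.
Qed.
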